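(* (1) For every $t\ge0$, $\mathfrak{e}^D_t\in\mathcal{E}(\mathcal{P}^{s+}_{3,5})$, but $\mathfrak{e}^D_t\notin\mathcal{E}(\mathcal{P}^{+}_{3,5})$. (2) If $t>0$, $t\ne1$ and $f\in\mathcal{P}^{s+}_{3,5}$ satisfies $f(t,1,1)=f(1,1,1)=f(0,0,1)=0$, then $f=\lambda\mathfrak{e}^D_t$ for some $\lambda\ge0$. (3) If $f\in\mathcal{P}^{s+}_{3,5}$ satisfies $f(1,1,1)=f_{aa}(1,1,1)=f(0,0,1)=0$, then $f=\lambda\mathfrak{e}^D_1$ for some $\lambda\ge0$; in particular $\mathfrak{e}^D_1=s_1-8s_3\in\mathcal{E}(\mathcal{P}^{s+}_{3,5})$. (4) If $f\in\mathcal{P}^{s+}_{3,5}$ satisfies $f(1,1,1)=f(0,0,1)=f_a(0,0,1)=0$ and $f_{aa}(0,0,1)+f_{ab}(0,0,1)=0$, then $f=\lambda\mathfrak{e}^D_\infty$ for some $\lambda\ge0$; in particular $\mathfrak{e}^D_\infty=s_2-2s_3\in\mathcal{E}(\mathcal{P}^{s+}_{3,5})$.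
   Context: Let $a,b,c$ be variables. For nonnegative integers $m,n$ put $S_{m,n}=a^mb^n+b^mc^n+c^ma^n$, $S_n=S_{n,0}=a^n+b^n+c^n$, $T_{m,n}=S_{m,n}+S_{n,m}$, $U=abc$ (so $S_{1,1}=ab+bc+ca$). Let $\mathcal{H}^s_{3,5}$ be the real vector space of symmetric homogeneous polynomials of degree 5 in $\mathbb{R}[a,b,c]$; it has basis $s_0=S_5-US_{1,1}$, $s_1=T_{4,1}-2US_{1,1}$, $s_2=T_{3,2}-2US_{1,1}$, $s_3=US_2-US_{1,1}$, $s_4=US_{1,1}$. Let $\mathcal{P}^{s+}_{3,5}=\{f\in\mathcal{H}^s_{3,5}: f(a,b,c)\ge 0\text{ for all }a,b,c\ge0\}$, and let $\mathcal{P}^+_{3,5}$ be the cone of all (not necessarily symmetric) real homogeneous quintic forms in $a,b,c$ that are nonnegative on $\mathbb{R}_{\ge0}^3$. For a closed convex cone $\mathcal{P}$, an element $f\in\mathcal{P}\setminus\{0\}$ is extremal if whenever $f=g+h$ with $g,h\in\mathcal{P}$ we have $g,h\in\mathbb{R}_{\ge0}f$; $\mathcal{E}(\mathcal{P})$ is the set of extremal elements. Subscripts denote partial derivatives: $f_a=\partial f/\partial a$, $f_{aa}=\partial^2f/\partial a^2$, $f_{ab}=\partial^2f/\partial a\partial b$, etc. Family D: $\mathfrak{e}^D_t=s_1+(t^2-1)s_2-2(t+1)^2s_3$, and $\mathfrak{e}^D_\infty=s_2-2s_3$. *)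

From HB Require Import structures.
From mathcomp Require Import all_boot all_order all_algebra.
From mathcomp Require Import reals.
From mathcomp Require Import mpoly.
Set Implicit Arguments. Unset Strict Implicit. Unset Printing Implicit Defensive.
Import Order.TTheory GRing.Theory Num.Theory.
Local Open Scope ring_scope.

Section Defs.
Variable R : realType.
Local Notation Q := {mpoly R[3]}.

Definition ia : 'I_3 := inord 0.
Definition ib : 'I_3 := inord 1.
Definition ic : 'I_3 := inord 2.
Definition Xa : Q := 'X_ia.
Definition Xb : Q := 'X_ib.
Definition Xc : Q := 'X_ic.

Definition pt (a b c : R) : 'I_3 -> R := fun i => nth 0 [:: a; b; c] i.
Definition ev (f : Q) (a b c : R) : R := f.@[pt a b c].

Definition da (f : Q) : Q := mderiv ia f.
Definition db (f : Q) : Q := mderiv ib f.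

Definition Smn (m n : nat) : Q := Xa ^+ m * Xb ^+ n + Xb ^+ m * Xc ^+ n + Xc ^+ m * Xa ^+ n.
Definition Sn (n : nat) : Q := Smn n 0.
Definition Tmn (m n : nat) : Q := Smn m n + Smn n m.
Definition U : Q := Xa * Xb * Xc.

Definition s0 : Q := Sn 5 - U * Smn 1 1.
Definition s1 : Q := Tmn 4 1 - 2%:R *: (U * Smn 1 1).
Definition s2 : Q := Tmn 3 2 - 2%:R *: (U * Smn 1 1).
Definition s3 : Q := U * Sn 2 - U * Smn 1 1.
Definition s4 : Q := U * Smn 1 1.

Definition eD (t : R) : Q := s1 + (t ^+ 2 - 1) *: s2 - (2%:R * (t + 1) ^+ 2) *: s3.
Definition eDinf : Q := s2 - 2%:R *: s3.

Definition Hs35 (f : Q) : Prop := f \is symmetric /\ f \is 5.-homog.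
Definition nonneg_orthant (f : Q) : Prop :=
  forall a b c : R, 0 <= a -> 0 <= b -> 0 <= c -> 0 <= ev f a b c.
Definition Ps35 (f : Q) : Prop := Hs35 f /\ nonneg_orthant f.
Definition P35 (f : Q) : Prop := f \is 5.-homog /\ nonneg_orthant f.

Definition extremal (P : Q -> Prop) (f : Q) : Prop :=
  P f /\ f != 0 /\
  forall g h : Q, P g -> P h -> f = g + h ->
    (exists l : R, 0 <= l /\ g = l *: f) /\ (exists l : R, 0 <= l /\ h = l *: f).
End Defs.

From HB Require Import structures.
From mathcomp Require Import all_boot all_order all_algebra.
From mathcomp Require Import reals.
From mathcomp Require Import mpoly.
From mathcomp Require Import fingroup perm.
From mathcomp Require Import ring lra zify.
Set Implicit Arguments. Unset Strict Implicit. Unset Printing Implicit Defensive.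
Import Order.TTheory GRing.Theory Num.Theory.
Local Open Scope ring_scope.

(* Every symmetric quintic is a combination of the monomial symmetric functions m_5, m_41,
   m_32, m_311, m_221; [symq k0 k1 k2 k3 k4] is the form with these coordinates.
   A nonnegative form vanishing at (0,0,1) has k0 = 0; if it also vanishes at (1,1,1), then
   f(x,1,1) = (x-1)^2 q(x) for a quadratic q that is nonnegative on [0,oo).  A zero of q at
   some t > 0 is a double root, so q is a multiple of (x-t)^2, and this determines f up to a
   scalar: it is a multiple of e^D_t.  When e^D_t = g + h in the cone, the quadratics of g and
   h add up to 2(x-t)^2, which squeezes each of them (this also covers t = 0).  For e^D_oo,
   expanding a nonnegative form near (0,0,1) along (0,s,1) and (s,s,1) shows that k1 and
   2 k2 + k3 are nonnegative, and both vanish for e^D_oo.  Finally e^D_t is the sum of the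
   three cyclic shifts of a(b-c)^2(b+c-(t+1)a)^2, each nonnegative on the orthant but not
   symmetric, hence not proportional to e^D_t. *)

Section NearZero.
Variable F : realFieldType.
Implicit Types a b e d : F.

Lemma ge0_lin_near0 e a b :
  0 < e -> (forall s, 0 < s -> s <= e -> 0 <= a + s * b) -> 0 <= a.
Proof.
move=> e_gt0 H; rewrite leNgt; apply/negP => a_lt0.
pose c := `|b| + 1; have c_gt0 : 0 < c by rewrite ltr_pwDr.
pose D := - a + e * c; have D_gt0 : 0 < D by rewrite addr_gt0 ?oppr_gt0 ?mulr_gt0.
pose s := e * - a / D.
have sD : s * D = e * - a by rewrite mulfVK ?gt_eqF.
have s_gt0 : 0 < s by rewrite !(mulr_gt0, invr_gt0) ?oppr_gt0.
have s_le_e : s <= e by rewrite -(ler_pM2r D_gt0) sD ler_pM2l // lerDl mulr_ge0 ?ltW.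
have sc_lt : s * c < - a.
  rewrite -(ltr_pM2r D_gt0) mulrAC sD /D.
  have : 0 < a ^+ 2 by rewrite expr2 nmulr_rgt0.
  have -> : - a * (- a + e * c) = a ^+ 2 + e * - a * c by ring.
  lra.
have sb_le : s * b <= s * c by rewrite ler_pM2l // /c (le_trans (ler_norm b)) ?lerDl.
by have := H s s_gt0 s_le_e; lra.
Qed.

Lemma ge0_cubic_near0 d p0 p1 p2 p3 : 0 < d ->
  (forall s, 0 < s -> s <= d -> 0 <= p0 + s * p1 + s ^+ 2 * p2 + s ^+ 3 * p3) ->
  0 <= p0.
Proof.
move=> d_gt0 H; apply: (@ge0_lin_near0 (Num.min d 1) _ (`|p1| + `|p2| + `|p3|)).
  by rewrite lt_min d_gt0 ltr01.
move=> s s_gt0; rewrite le_min => /andP[s_le_d s_le1].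
have s2_le : s ^+ 2 <= s by rewrite expr2 ger_pMl.
have s3_le : s ^+ 3 <= s by rewrite exprS ger_pMr // (le_trans s2_le).
have pow_le n p : 0 < s ^+ n -> s ^+ n <= s -> s ^+ n * p <= s * `|p|.
  by move=> sn_gt0 sn_le; rewrite (le_trans (ler_wpM2l (ltW sn_gt0) (ler_norm p)))
     ?ler_wpM2r ?normr_ge0.
have := pow_le 1%N p1; have := pow_le 2%N p2; have := pow_le 3%N p3.
rewrite !exprn_gt0 // expr1 lexx s2_le s3_le.
have := H s s_gt0 s_le_d; lra.
Qed.

Definition quad (A B C x : F) := A * x ^+ 2 + B * x + C.

Lemma quad_shift A B C u s :
  quad A B C (u + s) = quad A B C u + s * (2%:R * A * u + B) + s ^+ 2 * A.
Proof. rewrite /quad; ring. Qed.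

Lemma quad_ge0_at_hole A B C u : 0 <= u ->
  (forall x, 0 <= x -> x != u -> 0 <= quad A B C x) ->
  forall x, 0 <= x -> 0 <= quad A B C x.
Proof.
move=> u_ge0 H x x_ge0; have [->|] := eqVneq x u; last exact: H.
apply: (@ge0_cubic_near0 1 _ (2%:R * A * u + B) A 0 ltr01) => s s_gt0 _.
rewrite mulr0 addr0 -quad_shift; apply: H; first by rewrite addr_ge0 // ltW.
by rewrite -subr_eq0 addrAC subrr add0r gt_eqF.
Qed.

Lemma quad_ge0_double_root A B C t : 0 < t ->
  (forall x, 0 <= x -> 0 <= quad A B C x) -> quad A B C t = 0 ->
  [/\ 0 <= A, B = - (2%:R * A * t) & C = A * t ^+ 2].
Proof.
move=> t_gt0 H qt0; pose k := 2%:R * A * t + B.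
have shiftE s : quad A B C (t + s) = s * (k + s * A).
  by rewrite quad_shift qt0 /k; ring.
have k_ge0 : 0 <= k.
  apply: (@ge0_cubic_near0 1 k A 0 0 ltr01) => s s_gt0 _.
  rewrite !mulr0 !addr0 -(pmulr_rge0 _ s_gt0) -shiftE.
  by apply: H; rewrite addr_ge0 ?ltW.
have k_le0 : 0 <= - k.
  apply: (@ge0_cubic_near0 t (- k) A 0 0 t_gt0) => s s_gt0 s_le_t.
  rewrite !mulr0 !addr0 -(pmulr_rge0 _ s_gt0).
  rewrite (_ : s * (- k + s * A) = quad A B C (t + - s)); last by rewrite shiftE; ring.
  by apply: H; rewrite subr_ge0.
have k0 : k = 0 by lra.
have A_ge0 : 0 <= A by have := H (t + 1); rewrite shiftE k0; lra.
have B_eq : B = - (2%:R * A * t) by rewrite /k in k0; lra.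
split => //; move: qt0; rewrite /quad B_eq; lra.
Qed.

Lemma quad_ge0_root0 A B C : C = 0 ->
  (forall x, 0 <= x -> 0 <= quad A B C x) -> 0 <= B.
Proof.
move=> C0 H; apply: (@ge0_cubic_near0 1 B A 0 0 ltr01) => s s_gt0 _.
rewrite !mulr0 !addr0 -(pmulr_rge0 _ s_gt0).
have := H s (ltW s_gt0); rewrite /quad C0; nra.
Qed.

Lemma quad_sandwich A B C c t : 0 <= t ->
  (forall x, 0 <= x -> 0 <= quad A B C x <= c * (x - t) ^+ 2) ->
  [/\ 0 <= A, B = - (2%:R * A * t) & C = A * t ^+ 2].
Proof.
move=> t_ge0 H; have q_ge0 x (x_ge0 : 0 <= x) := proj1 (andP (H x x_ge0)).
have [t0|t_neq0] := eqVneq t 0; last first.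
  have /andP[_] := H t t_ge0; rewrite subrr expr0n mulr0 => qt_le0.
  apply: (quad_ge0_double_root _ q_ge0); first by rewrite lt_def t_neq0.
  by apply/eqP; rewrite eq_le qt_le0 q_ge0.
have C0 : C = 0.
  by have /andP[] := H 0 (lexx 0); rewrite /quad t0 subrr expr0n !mulr0 !add0r; lra.
have B_ge0 := quad_ge0_root0 C0 q_ge0.
have B_le0 : 0 <= - B.
  apply: (@quad_ge0_root0 (c - A) (- B) 0) => // x x_ge0.
  by have /andP[_] := H x x_ge0; rewrite /quad t0 C0 subr0; lra.
have A_ge0 : 0 <= A by have := q_ge0 1 ler01; rewrite /quad C0; lra.
by split => //; rewrite t0; lra.
Qed.

End NearZero.

Lemma iaE : ia = 0%N :> nat. Proof. by rewrite /ia inordK. Qed.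
Lemma ibE : ib = 1%N :> nat. Proof. by rewrite /ib inordK. Qed.
Lemma icE : ic = 2%N :> nat. Proof. by rewrite /ic inordK. Qed.

Lemma ord3P (j : 'I_3) : [\/ j = ia, j = ib | j = ic].
Proof.
case: j => -[|[|[|//]]] lt_j3; [apply: Or31 | apply: Or32 | apply: Or33];
  by apply/val_inj; rewrite /= ?iaE ?ibE ?icE.
Qed.

Lemma iab : (ia == ib) = false. Proof. by rewrite -val_eqE /= iaE ibE. Qed.
Lemma iac : (ia == ic) = false. Proof. by rewrite -val_eqE /= iaE icE. Qed.
Lemma ibc : (ib == ic) = false. Proof. by rewrite -val_eqE /= ibE icE. Qed.
Lemma iba : (ib == ia) = false. Proof. by rewrite eq_sym iab. Qed.
Lemma ica : (ic == ia) = false. Proof. by rewrite eq_sym iac. Qed.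
Lemma icb : (ic == ib) = false. Proof. by rewrite eq_sym ibc. Qed.

Definition mnm3 (x y z : nat) : 'X_{1..3} := [multinom nth 0%N [:: x; y; z] i | i < 3].

Lemma mnm3E x y z (j : 'I_3) : mnm3 x y z j = nth 0%N [:: x; y; z] j.
Proof. by rewrite mnmE. Qed.

Lemma eq_mnm3 x y z x' y' z' :
  (mnm3 x y z == mnm3 x' y' z') = [&& x == x', y == y' & z == z'].
Proof.
apply/eqP/and3P => [/mnmP E|[/eqP-> /eqP-> /eqP->] //].
by move: (E ia) (E ib) (E ic); rewrite !mnm3E iaE ibE icE /= => -> -> ->.
Qed.

Lemma mnm3_eta (m : 'X_{1..3}) : m = mnm3 (m ia) (m ib) (m ic).
Proof.
by apply/mnmP => j; rewrite mnm3E; case: (ord3P j) => ->; rewrite ?iaE ?ibE ?icE.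
Qed.

Lemma mdeg_mnm3 x y z : mdeg (mnm3 x y z) = (x + y + z)%N.
Proof. by rewrite mdegE !big_ord_recr big_ord0 /= !mnm3E /= add0n. Qed.

Lemma mnm3_perm (s : 'S_3) x y z :
  [multinom mnm3 x y z (s i) | i < 3] =
  mnm3 (nth 0%N [:: x; y; z] (s ia)) (nth 0%N [:: x; y; z] (s ib))
       (nth 0%N [:: x; y; z] (s ic)).
Proof.
by apply/mnmP => j; rewrite mnmE !mnm3E; case: (ord3P j) => ->; rewrite ?iaE ?ibE ?icE.
Qed.

Lemma perm3_ind (s : 'S_3) (P : nat -> nat -> nat -> Prop) :
  P 0 1 2 -> P 0 2 1 -> P 1 0 2 -> P 1 2 0 -> P 2 0 1 -> P 2 1 0 ->
  P (s ia) (s ib) (s ic).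
Proof.
have neq i j : (i == j) = false -> (nat_of_ord (s i) != s j).
  by move=> ij; rewrite val_eqE (inj_eq perm_inj) ij.
move: (neq _ _ iab) (neq _ _ iac) (neq _ _ ibc).
move: (ltn_ord (s ia)) (ltn_ord (s ib)) (ltn_ord (s ic)).
move: (nat_of_ord (s ia)) (nat_of_ord (s ib)) (nat_of_ord (s ic)) => u v w.
by case: u => [|[|[|u]]]; case: v => [|[|[|v]]]; case: w => [|[|[|w]]].
Qed.

Section SymmetricQuintics.
Variable R : comNzRingType.
Local Notation Q := {mpoly R[3]}.

Definition mono x y z : Q := 'X_[mnm3 x y z].

Lemma coeff_mono x y z x' y' z' :
  (mono x y z)@_(mnm3 x' y' z') = [&& x == x', y == y' & z == z']%:R.
Proof. by rewrite mcoeffX eq_mnm3. Qed.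

Lemma msym_mono (s : 'S_3) x y z :
  msym s (mono x y z) =
  mono (nth 0%N [:: x; y; z] ((s^-1)%g ia)) (nth 0%N [:: x; y; z] ((s^-1)%g ib))
       (nth 0%N [:: x; y; z] ((s^-1)%g ic)).
Proof. by rewrite /mono msymX mnm3_perm. Qed.

Lemma mono_homog x y z : mono x y z \is (x + y + z).-homog.
Proof. by rewrite dhomogX /= mdeg_mnm3. Qed.

Lemma coeff_swap_ab (f : Q) : f \is symmetric ->
  forall x y z, f@_(mnm3 x y z) = f@_(mnm3 y x z).
Proof.
move=> f_sym x y z; rewrite -(msym_coeff (mnm3 y x z) (tperm ia ib) f_sym) mnm3_perm.
by rewrite tpermL tpermR tpermD ?iaE ?ibE ?icE ?iac ?ibc ?iab.
Qed.

Lemma coeff_swap_bc (f : Q) : f \is symmetric ->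
  forall x y z, f@_(mnm3 x y z) = f@_(mnm3 x z y).
Proof.
move=> f_sym x y z; rewrite -(msym_coeff (mnm3 x z y) (tperm ib ic) f_sym) mnm3_perm.
by rewrite tpermL tpermR tpermD ?iaE ?ibE ?icE ?iac ?iab ?iba ?ica.
Qed.

Definition msp5 : Q := mono 5 0 0 + mono 0 5 0 + mono 0 0 5.
Definition msp41 : Q :=
  mono 4 1 0 + mono 0 4 1 + mono 1 0 4 + mono 1 4 0 + mono 0 1 4 + mono 4 0 1.
Definition msp32 : Q :=
  mono 3 2 0 + mono 0 3 2 + mono 2 0 3 + mono 2 3 0 + mono 0 2 3 + mono 3 0 2.
Definition msp311 : Q := mono 3 1 1 + mono 1 3 1 + mono 1 1 3.
Definition msp221 : Q := mono 2 2 1 + mono 2 1 2 + mono 1 2 2.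

Definition symq (k0 k1 k2 k3 k4 : R) : Q :=
  k0 *: msp5 + k1 *: msp41 + k2 *: msp32 + k3 *: msp311 + k4 *: msp221.

Lemma symq_homog k0 k1 k2 k3 k4 : symq k0 k1 k2 k3 k4 \is 5.-homog.
Proof.
rewrite /symq /msp5 /msp41 /msp32 /msp311 /msp221.
by repeat (apply: rpredD || apply: rpredZ || apply: mono_homog).
Qed.

Lemma symq_sym k0 k1 k2 k3 k4 : symq k0 k1 k2 k3 k4 \is symmetric.
Proof.
rewrite /symq; apply/issymP => s.
rewrite /msp5 /msp41 /msp32 /msp311 /msp221 !msymD !msymZ !msymD !msym_mono.
pattern (nat_of_ord ((s^-1)%g ia)), (nat_of_ord ((s^-1)%g ib)),
  (nat_of_ord ((s^-1)%g ic)).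
by apply: perm3_ind => /=; ring.
Qed.

Lemma coeff_symq k0 k1 k2 k3 k4 :
  let f := symq k0 k1 k2 k3 k4 in
  [/\ f@_(mnm3 5 0 0) = k0, f@_(mnm3 4 1 0) = k1, f@_(mnm3 3 2 0) = k2,
      f@_(mnm3 3 1 1) = k3 & f@_(mnm3 2 2 1) = k4].
Proof.
rewrite /= /symq /msp5 /msp41 /msp32 /msp311 /msp221.
by split; rewrite !mcoeffD !mcoeffZ !mcoeffD !coeff_mono /=; ring.
Qed.

Lemma symq_inj k0 k1 k2 k3 k4 m0 m1 m2 m3 m4 :
  symq k0 k1 k2 k3 k4 = symq m0 m1 m2 m3 m4 ->
  [/\ k0 = m0, k1 = m1, k2 = m2, k3 = m3 & k4 = m4].
Proof.
move=> E; have [k5 k41 k32 k311 k221] := coeff_symq k0 k1 k2 k3 k4.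
have [m5 m41 m32 m311 m221] := coeff_symq m0 m1 m2 m3 m4.
by split; [rewrite -k5 -m5 | rewrite -k41 -m41 | rewrite -k32 -m32
  | rewrite -k311 -m311 | rewrite -k221 -m221]; rewrite E.
Qed.

Lemma symqD k0 k1 k2 k3 k4 m0 m1 m2 m3 m4 :
  symq k0 k1 k2 k3 k4 + symq m0 m1 m2 m3 m4 =
  symq (k0 + m0) (k1 + m1) (k2 + m2) (k3 + m3) (k4 + m4).
Proof. rewrite /symq !scalerDl; ring. Qed.

Lemma symqZ l k0 k1 k2 k3 k4 :
  l *: symq k0 k1 k2 k3 k4 = symq (l * k0) (l * k1) (l * k2) (l * k3) (l * k4).
Proof. by rewrite /symq !scalerDr !scalerA. Qed.

(* [constr_eq] rather than unification: comparing coefficients at two distinct monomials by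
   conversion unfolds [mnm3] and is very slow. *)
Ltac known_coeff :=
  match goal with h : ?c = 0 |- ?d = 0 => constr_eq c d; exact: h end.
Ltac swap_ab sym := rewrite (coeff_swap_ab sym).
Ltac swap_bc sym := rewrite (coeff_swap_bc sym).
Ltac coeff_by_symmetry sym :=
  first [ known_coeff | swap_ab sym; known_coeff | swap_bc sym; known_coeff
        | swap_ab sym; swap_bc sym; known_coeff | swap_bc sym; swap_ab sym; known_coeff
        | swap_ab sym; swap_bc sym; swap_ab sym; known_coeff ].

Lemma symmetric_quintic_eq0 (g : Q) : g \is symmetric -> g \is 5.-homog ->
  g@_(mnm3 5 0 0) = 0 -> g@_(mnm3 4 1 0) = 0 -> g@_(mnm3 3 2 0) = 0 ->
  g@_(mnm3 3 1 1) = 0 -> g@_(mnm3 2 2 1) = 0 -> g = 0.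
Proof.
move=> g_sym g_homog g5 g41 g32 g311 g221.
apply/mpolyP => m; rewrite mcoeff0 (mnm3_eta m).
move: (m ia) (m ib) (m ic) => x y z.
have [deg5|deg_ne5] := eqVneq (x + y + z)%N 5; last first.
  have deg_m : mdeg (mnm3 x y z) != 5%N by rewrite mdeg_mnm3.
  exact: dhomog_nemf_coeff g_homog deg_m.
have -> : z = (5 - x - y)%N by lia.
have : (x + y <= 5)%N by lia.
case: x {deg5} => [|[|[|[|[|[|x]]]]]]; case: y => [|[|[|[|[|[|y]]]]]] le5;
  try (exfalso; lia).
all: rewrite ?(subSS, subn0); coeff_by_symmetry g_sym.
Qed.

Lemma symmetric_quinticE (f : Q) : f \is symmetric -> f \is 5.-homog ->
  f = symq f@_(mnm3 5 0 0) f@_(mnm3 4 1 0) f@_(mnm3 3 2 0) f@_(mnm3 3 1 1)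
           f@_(mnm3 2 2 1).
Proof.
move=> f_sym f_homog; apply/eqP; rewrite -subr_eq0; apply/eqP.
have [c5 c41 c32 c311 c221] := coeff_symq f@_(mnm3 5 0 0) f@_(mnm3 4 1 0)
  f@_(mnm3 3 2 0) f@_(mnm3 3 1 1) f@_(mnm3 2 2 1).
by apply: symmetric_quintic_eq0; rewrite ?rpredB ?symq_sym ?symq_homog // mcoeffB
  ?c5 ?c41 ?c32 ?c311 ?c221 subrr.
Qed.

End SymmetricQuintics.

Section Evaluation.
Variable R : realType.
Local Notation Q := {mpoly R[3]}.
Local Notation symq := (@symq R).
Local Notation mono := (@mono R).

Lemma monoE x y z : Xa R ^+ x * Xb R ^+ y * Xc R ^+ z = mono x y z.
Proof.
rewrite /Xa /Xb /Xc /mono !mpolyXn -!mpolyXD; congr 'X_[_].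
apply/mnmP => j; rewrite !mnmDE !mulmnE !mnm1E mnm3E.
by case: (ord3P j) => ->; rewrite ?iaE ?ibE ?icE /= ?eqxx ?iab ?iac ?ibc ?iba ?ica ?icb
  /= ?mul0n ?mul1n ?add0n ?addn0.
Qed.

Lemma SmnE m n : Smn R m n = mono m n 0 + mono 0 m n + mono n 0 m.
Proof. by rewrite /Smn -!monoE !expr0 !mulr1 !mul1r (mulrC (Xc R ^+ m)). Qed.

Lemma U_S2E : U R * Sn R 2 = mono 3 1 1 + mono 1 3 1 + mono 1 1 3.
Proof. rewrite /Sn SmnE /U -!monoE; ring. Qed.

Lemma U_S11E : U R * Smn R 1 1 = mono 2 2 1 + mono 2 1 2 + mono 1 2 2.
Proof. rewrite SmnE /U -!monoE; ring. Qed.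

Lemma eD_symq t :
  eD t = symq 0 1 (t ^+ 2 - 1) (- (2%:R * (t + 1) ^+ 2)) (4%:R * t + 2%:R).
Proof.
rewrite /eD /symq /s1 /s2 /s3 /Tmn /Sn U_S2E U_S11E !SmnE.
rewrite /msp5 /msp41 /msp32 /msp311 /msp221 -!mul_mpolyC; ring.
Qed.

Lemma eDinf_symq : eDinf R = symq 0 0 1 (- 2%:R) 0.
Proof.
rewrite /eDinf /symq /s2 /s3 /Tmn /Sn U_S2E U_S11E !SmnE.
rewrite /msp5 /msp41 /msp32 /msp311 /msp221 -!mul_mpolyC; ring.
Qed.

Lemma eD1E : eD (1 : R) = s1 R - 8%:R *: s3 R.
Proof. rewrite /eD -!mul_mpolyC; ring. Qed.

Lemma ev_mono x y z (a b c : R) : ev (mono x y z) a b c = a ^+ x * b ^+ y * c ^+ z.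
Proof. by rewrite /ev /mono mevalX !big_ord_recr big_ord0 /= !mnm3E /= mul1r. Qed.

Definition symq_ev (k0 k1 k2 k3 k4 a b c : R) : R :=
  k0 * (a ^+ 5 + b ^+ 5 + c ^+ 5)
  + k1 * (a ^+ 4 * b + b ^+ 4 * c + c ^+ 4 * a + a * b ^+ 4 + b * c ^+ 4 + c * a ^+ 4)
  + k2 * (a ^+ 3 * b ^+ 2 + b ^+ 3 * c ^+ 2 + c ^+ 3 * a ^+ 2
          + a ^+ 2 * b ^+ 3 + b ^+ 2 * c ^+ 3 + c ^+ 2 * a ^+ 3)
  + k3 * (a * b * c * (a ^+ 2 + b ^+ 2 + c ^+ 2))
  + k4 * (a * b * c * (a * b + b * c + c * a)).

Lemma ev_symq k0 k1 k2 k3 k4 a b c :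
  ev (symq k0 k1 k2 k3 k4) a b c = symq_ev k0 k1 k2 k3 k4 a b c.
Proof.
rewrite /ev /symq /msp5 /msp41 /msp32 /msp311 /msp221 !(mevalD, mevalZ).
by rewrite -!/(ev _ a b c) !ev_mono /symq_ev; ring.
Qed.

Lemma mderiv_ia_mono x y z : mderiv ia (mono x y z) = x%:R *: mono x.-1 y z.
Proof.
rewrite /mono mderivX mnm3E iaE; congr (_ *: 'X_[_]).
apply/mnmP => j; rewrite mnmBE !mnm3E mnm1E.
by case: (ord3P j) => ->; rewrite ?iaE ?ibE ?icE /= ?eqxx ?iab ?iac ?subn1 ?subn0.
Qed.

Lemma mderiv_ib_mono x y z : mderiv ib (mono x y z) = y%:R *: mono x y.-1 z.
Proof.
rewrite /mono mderivX mnm3E ibE; congr (_ *: 'X_[_]).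
apply/mnmP => j; rewrite mnmBE !mnm3E mnm1E.
by case: (ord3P j) => ->; rewrite ?iaE ?ibE ?icE /= ?eqxx ?iba ?ibc ?subn1 ?subn0.
Qed.

Ltac eval_derivative :=
  rewrite /da /db /symq /msp5 /msp41 /msp32 /msp311 /msp221
    !(mderivD, mderivZ, mderiv_ia_mono, mderiv_ib_mono) /=
    /ev !(mevalD, mevalZ) -!/(ev _ _ _ _) !ev_mono ?expr1n ?expr0n /=; ring.

Lemma ev_daa_symq_111 k0 k1 k2 k3 k4 :
  ev (da (da (symq k0 k1 k2 k3 k4))) 1 1 1 =
  20%:R * k0 + 24%:R * k1 + 16%:R * k2 + 6%:R * k3 + 4%:R * k4.
Proof. eval_derivative. Qed.

Lemma ev_da_symq_001 k0 k1 k2 k3 k4 : ev (da (symq k0 k1 k2 k3 k4)) 0 0 1 = k1.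
Proof. eval_derivative. Qed.

Lemma ev_daa_symq_001 k0 k1 k2 k3 k4 :
  ev (da (da (symq k0 k1 k2 k3 k4))) 0 0 1 = 2%:R * k2.
Proof. eval_derivative. Qed.

Lemma ev_dba_symq_001 k0 k1 k2 k3 k4 : ev (db (da (symq k0 k1 k2 k3 k4))) 0 0 1 = k3.
Proof. eval_derivative. Qed.

End Evaluation.

Section Faces.
Variable R : realType.
Local Notation Q := {mpoly R[3]}.
Local Notation symq := (@symq R).
Implicit Types a b c t : R.

Lemma Ps35_symqP (f : Q) : Ps35 f ->
  exists k0 k1 k2 k3 k4, f = symq k0 k1 k2 k3 k4.
Proof. by case=> -[f_sym f_homog] _; rewrite (symmetric_quinticE f_sym f_homog); do 5 eexists. Qed.

Lemma Ps35_symq (k0 k1 k2 k3 k4 : R) :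
  nonneg_orthant (symq k0 k1 k2 k3 k4) -> Ps35 (symq k0 k1 k2 k3 k4).
Proof. by split => //; split; [exact: symq_sym | exact: symq_homog]. Qed.

Lemma nonneg_orthant_summand (g h : Q) a b c :
  nonneg_orthant g -> nonneg_orthant h -> 0 <= a -> 0 <= b -> 0 <= c ->
  ev (g + h) a b c = 0 -> ev g a b c = 0.
Proof.
move=> g_ge0 h_ge0 a_ge0 b_ge0 c_ge0; rewrite /ev mevalD -!/(ev _ a b c).
by have := g_ge0 a b c a_ge0 b_ge0 c_ge0; have := h_ge0 a b c a_ge0 b_ge0 c_ge0; lra.
Qed.

Lemma symq_ev_001 (k0 k1 k2 k3 k4 : R) : symq_ev k0 k1 k2 k3 k4 0 0 1 = k0.
Proof. rewrite /symq_ev; ring. Qed.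

Lemma symq_ev_111 (k0 k1 k2 k3 k4 : R) :
  symq_ev k0 k1 k2 k3 k4 1 1 1 = 3%:R * k0 + 6%:R * k1 + 6%:R * k2 + 3%:R * k3 + 3%:R * k4.
Proof. rewrite /symq_ev; ring. Qed.

Definition edge_quad (k1 k2 k3 : R) : R -> R :=
  quad (2%:R * k1) (4%:R * k1 + 2%:R * k2 + k3) (2%:R * (k1 + k2)).

Lemma symq_ev_x11 (k1 k2 k3 k4 x : R) : symq_ev 0 k1 k2 k3 k4 1 1 1 = 0 ->
  symq_ev 0 k1 k2 k3 k4 x 1 1 = (x - 1) ^+ 2 * edge_quad k1 k2 k3 x.
Proof.
rewrite symq_ev_111 => v111; have -> : k4 = - (2%:R * k1 + 2%:R * k2 + k3) by lra.
rewrite /symq_ev /edge_quad /quad; ring.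
Qed.

Lemma nonneg_edge_quad (k1 k2 k3 k4 : R) :
  nonneg_orthant (symq 0 k1 k2 k3 k4) -> symq_ev 0 k1 k2 k3 k4 1 1 1 = 0 ->
  forall x, 0 <= x -> 0 <= edge_quad k1 k2 k3 x.
Proof.
move=> f_ge0 v111; apply: (quad_ge0_at_hole ler01) => x x_ge0 x_neq1.
have := f_ge0 x 1 1 x_ge0 ler01 ler01.
by rewrite ev_symq symq_ev_x11 // pmulr_rge0 // exprn_even_gt0 //= subr_eq0.
Qed.

Lemma nonneg_symq_k1 (k1 k2 k3 k4 : R) :
  nonneg_orthant (symq 0 k1 k2 k3 k4) -> 0 <= k1.
Proof.
move=> f_ge0; apply: (@ge0_cubic_near0 _ 1 k1 k2 k2 k1 ltr01) => s s_gt0 _.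
have := f_ge0 0 s 1 (lexx 0) (ltW s_gt0) ler01; rewrite ev_symq.
have -> : symq_ev 0 k1 k2 k3 k4 0 s 1 =
  s * (k1 + s * k2 + s ^+ 2 * k2 + s ^+ 3 * k1) by rewrite /symq_ev; ring.
by rewrite pmulr_rge0.
Qed.

Lemma nonneg_symq_k2k3 (k2 k3 k4 : R) :
  nonneg_orthant (symq 0 0 k2 k3 k4) -> 0 <= 2%:R * k2 + k3.
Proof.
move=> f_ge0.
apply: (@ge0_cubic_near0 _ 1 _ (2%:R * (k2 + k4)) (2%:R * k3 + k4) (2%:R * k2) ltr01).
move=> s s_gt0 _; have := f_ge0 s s 1 (ltW s_gt0) (ltW s_gt0) ler01; rewrite ev_symq.
have -> : symq_ev 0 0 k2 k3 k4 s s 1 = s ^+ 2 * (2%:R * k2 + k3 + s * (2%:R * (k2 + k4))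
    + s ^+ 2 * (2%:R * k3 + k4) + s ^+ 3 * (2%:R * k2)) by rewrite /symq_ev; ring.
by rewrite pmulr_rge0 // exprn_gt0.
Qed.

Lemma symq_ev_011 (k2 k3 k4 : R) : symq_ev 0 0 k2 k3 k4 0 1 1 = 2%:R * k2.
Proof. rewrite /symq_ev; ring. Qed.

Lemma eD_of_edge_quad (k1 k2 k3 k4 t : R) :
  symq_ev 0 k1 k2 k3 k4 1 1 1 = 0 ->
  4%:R * k1 + 2%:R * k2 + k3 = - (2%:R * (2%:R * k1) * t) ->
  2%:R * (k1 + k2) = 2%:R * k1 * t ^+ 2 ->
  symq 0 k1 k2 k3 k4 = k1 *: eD t.
Proof.
rewrite symq_ev_111 => v111 B_eq C_eq.
have k2E : k2 = k1 * (t ^+ 2 - 1) by lra.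
have k3E : k3 = k1 * - (2%:R * (t + 1) ^+ 2).
  by rewrite (_ : k3 = - (4%:R * k1 * t) - 4%:R * k1 - 2%:R * k2) ?k2E; [ring | lra].
have k4E : k4 = k1 * (4%:R * t + 2%:R).
  by rewrite (_ : k4 = - (2%:R * k1 + 2%:R * k2 + k3)) ?k2E ?k3E; [ring | lra].
by rewrite eD_symq symqZ mulr0 mulr1 k2E k3E k4E.
Qed.

Lemma eD_face (k1 k2 k3 k4 t : R) : 0 < t ->
  nonneg_orthant (symq 0 k1 k2 k3 k4) -> symq_ev 0 k1 k2 k3 k4 1 1 1 = 0 ->
  edge_quad k1 k2 k3 t = 0 ->
  exists l, 0 <= l /\ symq 0 k1 k2 k3 k4 = l *: eD t.
Proof.
move=> t_gt0 f_ge0 v111 qt0.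
have [A_ge0 B_eq C_eq] := quad_ge0_double_root t_gt0 (nonneg_edge_quad f_ge0 v111) qt0.
by exists k1; split; [lra | exact: eD_of_edge_quad].
Qed.

Lemma eDinf_face (k2 k3 k4 : R) :
  nonneg_orthant (symq 0 0 k2 k3 k4) -> symq_ev 0 0 k2 k3 k4 1 1 1 = 0 ->
  2%:R * k2 + k3 = 0 -> exists l, 0 <= l /\ symq 0 0 k2 k3 k4 = l *: eDinf R.
Proof.
move=> f_ge0 v111 k23; have := f_ge0 0 1 1 (lexx 0) ler01 ler01.
rewrite ev_symq symq_ev_011 => k2_ge0; move: v111; rewrite symq_ev_111 => v111.
exists k2; split; first lra.
have k3E : k3 = k2 * - 2%:R by lra.
have k4E : k4 = 0 by lra.
by rewrite eDinf_symq symqZ k3E k4E !mulr0 mulr1.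
Qed.

End Faces.

Section Extremality.
Variable R : realType.
Local Notation Q := {mpoly R[3]}.
Local Notation symq := (@symq R).

Lemma extremalP (P : Q -> Prop) (f : Q) : P f -> f != 0 ->
  (forall g h, P g -> P h -> f = g + h -> exists l, 0 <= l /\ g = l *: f) ->
  extremal P f.
Proof.
move=> Pf f_neq0 face; split => //; split => // g h Pg Ph fE.
by split; [exact: face Pg Ph fE | apply: face Ph Pg _; rewrite addrC].
Qed.

Definition eD_term (t a b c : R) := a * (b - c) ^+ 2 * (b + c - (t + 1) * a) ^+ 2.

Lemma eD_term_ge0 (t a b c : R) : 0 <= a -> 0 <= eD_term t a b c.
Proof. by move=> a_ge0; apply: mulr_ge0 (sqr_ge0 _); apply: mulr_ge0 (sqr_ge0 _). Qed.

Lemma ev_eD (t a b c : R) :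
  ev (eD t) a b c = eD_term t a b c + eD_term t b c a + eD_term t c a b.
Proof. rewrite eD_symq ev_symq /symq_ev /eD_term; ring. Qed.

Lemma ev_eDinf (a b c : R) :
  ev (eDinf R) a b c = a ^+ 3 * (b - c) ^+ 2 + b ^+ 3 * (c - a) ^+ 2 + c ^+ 3 * (a - b) ^+ 2.
Proof. rewrite eDinf_symq ev_symq /symq_ev; ring. Qed.

Lemma nonneg_eD (t : R) : nonneg_orthant (eD t).
Proof. by move=> a b c a_ge0 b_ge0 c_ge0; rewrite ev_eD !addr_ge0 ?eD_term_ge0. Qed.

Lemma nonneg_eDinf : nonneg_orthant (eDinf R).
Proof.
move=> a b c a_ge0 b_ge0 c_ge0; rewrite ev_eDinf.
by rewrite !addr_ge0 // mulr_ge0 ?sqr_ge0 ?exprn_ge0.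
Qed.

Lemma eD_neq0 (t : R) : eD t != 0.
Proof.
apply/eqP => /(congr1 (fun p => ev p 0 1 2%:R)); rewrite ev_eD /ev meval0 /eD_term.
by have := sqr_ge0 t; nra.
Qed.

Lemma eDinf_neq0 : eDinf R != 0.
Proof.
apply/eqP => /(congr1 (fun p => ev p 1 1 0)); rewrite ev_eDinf /ev meval0 => E.
have : (2%:R : R) == 0 by apply/eqP; rewrite -E; ring.
by rewrite pnatr_eq0.
Qed.

Lemma Ps35_vanishing_001_111 (f : Q) : Ps35 f -> ev f 0 0 1 = 0 -> ev f 1 1 1 = 0 ->
  exists k1 k2 k3 k4, f = symq 0 k1 k2 k3 k4 /\ symq_ev 0 k1 k2 k3 k4 1 1 1 = 0.
Proof.
move=> Pf; have [k0 [k1 [k2 [k3 [k4 ->]]]]] := Ps35_symqP Pf.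
rewrite !ev_symq symq_ev_001 => -> v111.
by exists k1, k2, k3, k4.
Qed.

Lemma Ps35_summand_vanishing_001_111 (f g h : Q) : Ps35 g -> Ps35 h -> f = g + h ->
  ev f 0 0 1 = 0 -> ev f 1 1 1 = 0 ->
  exists k1 k2 k3 k4, g = symq 0 k1 k2 k3 k4 /\ symq_ev 0 k1 k2 k3 k4 1 1 1 = 0.
Proof.
move=> Pg Ph fE f001 f111; have [[_ g_ge0] [_ h_ge0]] := (Pg, Ph).
have g_root a b c : 0 <= a -> 0 <= b -> 0 <= c -> ev f a b c = 0 -> ev g a b c = 0.
  by rewrite fE; exact: nonneg_orthant_summand.
by apply: Ps35_vanishing_001_111 => //; apply: g_root; rewrite ?lexx ?ler01.
Qed.

Lemma eD_summand (t : R) (g h : Q) : 0 <= t -> Ps35 g -> Ps35 h -> eD t = g + h ->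
  exists l, 0 <= l /\ g = l *: eD t.
Proof.
move=> t_ge0 Pg Ph eDE; have eDE' : eD t = h + g by rewrite addrC.
have ev001 : ev (eD t) 0 0 1 = 0 by rewrite ev_eD /eD_term; ring.
have ev111 : ev (eD t) 1 1 1 = 0 by rewrite ev_eD /eD_term; ring.
have [k1 [k2 [k3 [k4 [gE v111k]]]]] :=
  Ps35_summand_vanishing_001_111 Pg Ph eDE ev001 ev111.
have [m1 [m2 [m3 [m4 [hE v111m]]]]] :=
  Ps35_summand_vanishing_001_111 Ph Pg eDE' ev001 ev111.
move: (Pg) (Ph) eDE => [_ g_ge0] [_ h_ge0]; rewrite gE hE in g_ge0 h_ge0 * => eDE.
move: (eD_symq t); rewrite {1}eDE symqD => /symq_inj[_ e1 e2 e3 _].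
have qk_ge0 := nonneg_edge_quad g_ge0 v111k.
have qm_ge0 := nonneg_edge_quad h_ge0 v111m.
have qsum x : edge_quad k1 k2 k3 x + edge_quad m1 m2 m3 x = 2%:R * (x - t) ^+ 2.
  rewrite /edge_quad /quad.
  have -> : m1 = 1 - k1 by lra.
  have -> : m2 = t ^+ 2 - 1 - k2 by lra.
  have -> : m3 = - (2%:R * (t + 1) ^+ 2) - k3 by lra.
  ring.
have [A_ge0 B_eq C_eq] : [/\ 0 <= 2%:R * k1,
    4%:R * k1 + 2%:R * k2 + k3 = - (2%:R * (2%:R * k1) * t)
    & 2%:R * (k1 + k2) = 2%:R * k1 * t ^+ 2].
  apply: (quad_sandwich (c := 2%:R) t_ge0) => x x_ge0.
  have := qk_ge0 x x_ge0; have := qm_ge0 x x_ge0; have := qsum x.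
  rewrite /edge_quad => ? ? ?; apply/andP; split; lra.
by exists k1; split; [lra | exact: eD_of_edge_quad].
Qed.

Lemma eDinf_summand (g h : Q) : Ps35 g -> Ps35 h -> eDinf R = g + h ->
  exists l, 0 <= l /\ g = l *: eDinf R.
Proof.
move=> Pg Ph eDE; have eDE' : eDinf R = h + g by rewrite addrC.
have ev001 : ev (eDinf R) 0 0 1 = 0 by rewrite ev_eDinf; ring.
have ev111 : ev (eDinf R) 1 1 1 = 0 by rewrite ev_eDinf; ring.
have [k1 [k2 [k3 [k4 [gE v111k]]]]] :=
  Ps35_summand_vanishing_001_111 Pg Ph eDE ev001 ev111.
have [m1 [m2 [m3 [m4 [hE v111m]]]]] :=
  Ps35_summand_vanishing_001_111 Ph Pg eDE' ev001 ev111.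
move: (Pg) (Ph) eDE => [_ g_ge0] [_ h_ge0]; rewrite gE hE in g_ge0 h_ge0 * => eDE.
move: (eDinf_symq R); rewrite {1}eDE symqD => /symq_inj[_ e1 e2 e3 _].
have k1_ge0 := nonneg_symq_k1 g_ge0; have m1_ge0 := nonneg_symq_k1 h_ge0.
have k1E : k1 = 0 by lra.
have m1E : m1 = 0 by lra.
rewrite k1E in g_ge0 v111k *; rewrite m1E in h_ge0.
have := nonneg_symq_k2k3 g_ge0; have := nonneg_symq_k2k3 h_ge0 => k23_ge0 m23_ge0.
by apply: eDinf_face => //; lra.
Qed.

Definition eD_first_term (t : R) : Q :=
  Xa R * (Xb R - Xc R) ^+ 2 * (Xb R + Xc R - (t + 1) *: Xa R) ^+ 2.

Lemma ev_eD_first_term (t a b c : R) : ev (eD_first_term t) a b c = eD_term t a b c.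
Proof.
rewrite /ev /eD_first_term /Xa /Xb /Xc.
by rewrite !(mevalM, mevalB, mevalD, mevalZ, rmorphXn, mevalXU) /pt iaE ibE icE.
Qed.

Lemma eD_first_term_homog (t : R) : eD_first_term t \is 5.-homog.
Proof.
have X_homog (i : 'I_3) : ('X_i : Q) \is 1.-homog by rewrite dhomogX /= mdeg1.
have lin1 : (Xb R - Xc R) \is 1.-homog by rewrite rpredB ?X_homog.
have lin2 : (Xb R + Xc R - (t + 1) *: Xa R) \is 1.-homog.
  by rewrite rpredB ?rpredD ?rpredZ ?X_homog.
exact: dhomogM (dhomogM (X_homog ia) (dhomogMn 2 lin1)) (dhomogMn 2 lin2).
Qed.

Lemma eD_not_extremal (t : R) : ~ extremal (@P35 R) (eD t).
Proof.
move=> [_ [_ eD_ext]].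
have P_term : P35 (eD_first_term t).
  split; first exact: eD_first_term_homog.
  by move=> a b c a_ge0 _ _; rewrite ev_eD_first_term eD_term_ge0.
have P_rest : P35 (eD t - eD_first_term t).
  split; first by rewrite rpredB ?eD_first_term_homog // eD_symq symq_homog.
  move=> a b c a_ge0 b_ge0 c_ge0.
  rewrite /ev mevalB -!/(ev _ a b c) ev_eD ev_eD_first_term.
  rewrite (_ : _ - _ = eD_term t b c a + eD_term t c a b); last by ring.
  by rewrite addr_ge0 ?eD_term_ge0.
have eD_split : eD t = eD_first_term t + (eD t - eD_first_term t) by rewrite addrC subrK.
have [[l [_ termE]] _] := eD_ext _ _ P_term P_rest eD_split.
(* The term vanishes at (0,1,2), where eD t does not, but not at both (1,0,1) and (2,0,1). *)
have := congr1 (fun p => ev p 0 1 2%:R) termE; have := congr1 (fun p => ev p 1 0 1) termE.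
have := congr1 (fun p => ev p 2%:R 0 1) termE.
rewrite /= /ev !mevalZ -!/(ev _ _ _ _) !ev_eD_first_term !ev_eD /eD_term.
by have := sqr_ge0 t; nra.
Qed.

Lemma eD_extremal (t : R) : 0 <= t -> extremal (@Ps35 R) (eD t).
Proof.
move=> t_ge0; apply: extremalP (eD_neq0 t) (fun g h => @eD_summand t g h t_ge0).
by rewrite eD_symq; apply: Ps35_symq; rewrite -eD_symq; exact: nonneg_eD.
Qed.

Lemma eDinf_extremal : extremal (@Ps35 R) (eDinf R).
Proof.
apply: extremalP eDinf_neq0 eDinf_summand.
by rewrite eDinf_symq; apply: Ps35_symq; rewrite -eDinf_symq; exact: nonneg_eDinf.
Qed.

End Extremality.

Section Uniqueness.
Variable R : realType.
Local Notation Q := {mpoly R[3]}.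

Lemma Ps35_eq_eD (t : R) (f : Q) : 0 < t -> t != 1 -> Ps35 f ->
  ev f t 1 1 = 0 -> ev f 1 1 1 = 0 -> ev f 0 0 1 = 0 ->
  exists l, 0 <= l /\ f = l *: eD t.
Proof.
move=> t_gt0 t_neq1 Pf ft11 f111 f001.
have [k1 [k2 [k3 [k4 [fE v111]]]]] := Ps35_vanishing_001_111 Pf f001 f111.
move: Pf ft11 => [_ f_ge0]; rewrite fE ev_symq symq_ev_x11 // in f_ge0 * => /eqP.
rewrite mulf_eq0 expf_eq0 subr_eq0 (negbTE t_neq1) /= => /eqP qt0.
exact: eD_face t_gt0 f_ge0 v111 qt0.
Qed.

Lemma Ps35_eq_eD1 (f : Q) : Ps35 f ->
  ev f 1 1 1 = 0 -> ev (da (da f)) 1 1 1 = 0 -> ev f 0 0 1 = 0 ->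
  exists l, 0 <= l /\ f = l *: eD 1.
Proof.
move=> Pf f111 faa111 f001.
have [k1 [k2 [k3 [k4 [fE v111]]]]] := Ps35_vanishing_001_111 Pf f001 f111.
move: Pf faa111 => [_ f_ge0]; rewrite fE ev_daa_symq_111 in f_ge0 * => faa111.
have q1 : edge_quad k1 k2 k3 1 = 0.
  by move: v111; rewrite symq_ev_111 /edge_quad /quad expr1n !mulr1; lra.
exact: eD_face ltr01 f_ge0 v111 q1.
Qed.

Lemma Ps35_eq_eDinf (f : Q) : Ps35 f ->
  ev f 1 1 1 = 0 -> ev f 0 0 1 = 0 -> ev (da f) 0 0 1 = 0 ->
  ev (da (da f)) 0 0 1 + ev (db (da f)) 0 0 1 = 0 ->
  exists l, 0 <= l /\ f = l *: eDinf R.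
Proof.
move=> Pf f111 f001 fa001 f2_001.
have [k1 [k2 [k3 [k4 [fE v111]]]]] := Ps35_vanishing_001_111 Pf f001 f111.
move: Pf fa001 f2_001 => [_ f_ge0].
rewrite fE ev_da_symq_001 ev_daa_symq_001 ev_dba_symq_001 in f_ge0 * => k1E k23.
by rewrite k1E in f_ge0 v111 *; apply: eDinf_face.
Qed.

End Uniqueness.

Theorem theorem4p4 (R : realType) :
  (* (1) *)
  (forall t : R, 0 <= t ->
     extremal (@Ps35 R) (eD t) /\ ~ extremal (@P35 R) (eD t)) /\
  (* (2) *)
  (forall (t : R) (f : {mpoly R[3]}), 0 < t -> t != 1 -> Ps35 f ->
     ev f t 1 1 = 0 -> ev f 1 1 1 = 0 -> ev f 0 0 1 = 0 ->
     exists l : R, 0 <= l /\ f = l *: eD t) /\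
  (* (3) *)
  ((forall f : {mpoly R[3]}, Ps35 f ->
     ev f 1 1 1 = 0 -> ev (da (da f)) 1 1 1 = 0 -> ev f 0 0 1 = 0 ->
     exists l : R, 0 <= l /\ f = l *: eD 1) /\
   eD (1 : R) = s1 R - 8%:R *: s3 R /\ extremal (@Ps35 R) (eD 1)) /\
  (* (4) *)
  ((forall f : {mpoly R[3]}, Ps35 f ->
     ev f 1 1 1 = 0 -> ev f 0 0 1 = 0 -> ev (da f) 0 0 1 = 0 ->
     ev (da (da f)) 0 0 1 + ev (db (da f)) 0 0 1 = 0 ->
     exists l : R, 0 <= l /\ f = l *: eDinf R) /\
   eDinf R = s2 R - 2%:R *: s3 R /\ extremal (@Ps35 R) (eDinf R)).
Proof.
split; first by move=> t t_ge0; split; [exact: eD_extremal | exact: eD_not_extremal].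
split; first exact: Ps35_eq_eD.
split; first by split; [exact: Ps35_eq_eD1 | split; [exact: eD1E | exact: eD_extremal ler01]].
by split; [exact: Ps35_eq_eDinf | split; [by [] | exact: eDinf_extremal]].
Qed.
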